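(* Consider one time step (from time $t-1$ to time $t$, $t\ge1$) of the multi-class stochastic six-vertex model with classes $\{1,\dots,n\}$ and finitely many particles, and let $p_{t-1}^{(r)}(k)$ and $p_t^{(r)}(k)$ denote the positions before and after the step of the $k$-th particle of class $r$ (class-$r$ particles tagged in increasing order of position). Then for every integer $v\ge0$, every $r\in[1,n]$ and every label $k$, $$\mathbb P\big[p_t^{(r)}(k)-p_{t-1}^{(r)}(k)\ge v\big]\le b_2^{v-1}.$$
   Context: Fix $0<b_1<b_2<1$. Multi-class stochastic six-vertex dynamics: each site of $\mathbb Z$ holds nothing or a particle of class $r\in\{1,\dots,n\}$. One step uses independent $\chi^{(r)}(x)$ ($P[=1]=b_1$, else 0) and $j^{(r)}(x)$ ($P[=m]=(1-b_2)b_2^{m-1}$, $m\ge1$). Particles are updated in increasing class order and, within a class, from left to right. For the $k$-th class-$r$ particle at $x$, with the $(k+1)$-th class-$r$ particle at old position $y$ ($\infty$ if none): (a) it stays if some particle of class $<r$ jumped this step from a site $<x$ to a site $>x$; (b) otherwise it moves if site $x$ is already occupied at the new time by a class-$<r$ particle or by the $(k-1)$-th class-$r$ particle; (c) otherwise it stays if $\chi^{(r)}(x)=1$ and moves if $\chi^{(r)}(x)=0$. If it moves, its new position is $\min\{U,V,y\}$, where $U$ is the least site $>x$ that is the old position of a class-$<r$ particle that moved in this step, and $V$ is the site reached by advancing $j^{(r)}(x)$ sites to the right of $x$, not counting sites occupied by class-$<r$ particles that stayed. *)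

From HB Require Import structures.
From mathcomp Require Import all_boot all_order all_algebra.
From mathcomp Require Import all_classical all_reals all_analysis.
Set Implicit Arguments. Unset Strict Implicit. Unset Printing Implicit Defensive.
Import Order.TTheory GRing.Theory Num.Theory.
Local Open Scope ring_scope.

(* A configuration is eta : int -> nat, eta x = 0 means site x is empty,
   eta x = r >= 1 means site x holds a particle of class r.
   All particles lie in the box [a, a + W). *)

(* Old positions of the class-r particles, listed in increasing order
   (so the k-th element, k counted from 1, is p_{t-1}^{(r)}(k)). *)
Definition positions (eta : int -> nat) (a : int) (W : nat) (r : nat) : seq int :=
  [seq x <- [seq a + (i%:Z) | i <- iota 0 W] | eta x == r].

Definition count_free (s : seq int) (x : int) (d : nat) : nat :=
  count (fun i : nat => (x + (i.+1)%:Z) \notin s) (iota 0 d).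

(* V: the site reached by advancing j sites to the right of x, not counting
   the sites in s: x + (least d with exactly j free sites in {x+1..x+d}). *)
Definition advance (s : seq int) (x : int) (j : nat) : int :=
  x + (find (fun d => count_free s x d == j) (iota 0 (j + size s).+1))%:Z.

Definition omin (o : option int) (z : int) : int :=
  if o is Some u then Num.min u z else z.

Definition ominl (s : seq int) : option int :=
  if s is u :: s' then Some (foldr Num.min u s') else None.

(* Update of the class-r particles, left to right.
   lower = (old, new) positions of all particles of class < r (already updated),
   chi x, j x = chi^{(r)}(x), j^{(r)}(x),
   prev = new position of the (k-1)-th class-r particle (None if k = 1),
   ps = old positions of the class-r particles k, k+1, ... *)
Fixpoint step_class (lower : seq (int * int)) (chi : int -> bool)
    (j : int -> nat) (prev : option int) (ps : seq int) : seq (int * int) :=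
  match ps with
  | [::] => [::]
  | x :: rest =>
    let moved := [seq pr <- lower | pr.1 != pr.2] in
    let stayed := [seq pr.1 | pr <- lower & pr.1 == pr.2] in
    let ca := has (fun pr => (pr.1 < x) && (x < pr.2)) moved in
    let cb := has (fun pr => pr.2 == x) lower || (prev == Some x) in
    let stays := ca || (~~ cb && chi x) in
    let U := ominl [seq pr.1 | pr <- moved & x < pr.1] in
    let V := advance stayed x (j x) in
    let y := ohead rest in
    let nx := if stays then x else omin U (omin y V) in
    (x, nx) :: step_class lower chi j (Some nx) rest
  end.

(* Run classes 1, ..., m in increasing order; the r-th entry (r counted from 1)
   is the list of (old, new) positions of the class-r particles, tagged in
   increasing order of old position. *)
Fixpoint run (eta : int -> nat) (a : int) (W : nat)
    (chi : nat -> int -> bool) (j : nat -> int -> nat) (m : nat)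
    : seq (seq (int * int)) :=
  match m with
  | 0 => [::]
  | m'.+1 =>
    let prev := run eta a W chi j m' in
    rcons prev (step_class (flatten prev) (chi m) (j m) None (positions eta a W m))
  end.

Definition displacement eta a W chi j (n r k : nat) : int :=
  let pr := nth (0, 0) (nth [::] (run eta a W chi j n) r.-1) k.-1 in
  pr.2 - pr.1.

(* Randomness: omega (r', i) = (chi, m) encodes chi^{(r'+1)}(a+i) = chi and
   j^{(r'+1)}(a+i) = m+1, for sites in the box (the only sites queried). *)
Definition Omega (n W : nat) := {ffun 'I_n * 'I_W -> bool * nat}.

Definition lookup (n W : nat) (a : int) (om : Omega n W) (r : nat) (x : int)
  : bool * nat :=
  if [pick i : 'I_n * 'I_W | ((i.1 : nat) == r.-1) && (a + (i.2 : nat)%:Z == x)]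
     is Some i then om i else (false, 0%N).

Definition chi_of n W a (om : Omega n W) (r : nat) (x : int) : bool :=
  (lookup a om r x).1.
Definition j_of n W a (om : Omega n W) (r : nat) (x : int) : nat :=
  (lookup a om r x).2.+1.

Definition weight (R : realType) (b1 b2 : R) n W (om : Omega n W) : R :=
  \prod_(i : 'I_n * 'I_W)
     ((if (om i).1 then b1 else 1 - b1) * ((1 - b2) * b2 ^+ (om i).2)).

Definition prob_disp_ge (R : realType) (b1 b2 : R) (n : nat)
    (eta : int -> nat) (a : int) (W : nat) (r k v : nat) : \bar R :=
  \esum_(om in [set: Omega n W])
    (if (v%:Z <= displacement eta a W (chi_of a om) (j_of a om) n r k)%R
     then (weight b1 b2 om)%:E else 0%E).

(* If the k-th class-r particle, at x, moves at least v sites, then no particle of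
   class < r in (x, x + v) moved (its old position would cap the jump through U), and
   none of them was held by rule (a): a particle jumping over it either jumps over x
   too, or starts in (x, x + v) and has moved.  So each of them stayed because its own
   chi equals 1.  These l stayed particles are the only sites that V skips, hence
   j^(r)(x) > v - 1 - l.  The l + 1 conditions concern distinct independent
   coordinates, so their probability is at most b1^l b2^(v-1-l) <= b2^(v-1). *)

From mathcomp Require Import all_boot all_order all_algebra.
From mathcomp Require Import all_classical all_reals all_analysis.
From mathcomp Require Import zify ring.
Import Order.TTheory GRing.Theory Num.Theory.
Local Open Scope ring_scope.
Set Implicit Arguments. Unset Strict Implicit. Unset Printing Implicit Defensive.

Definition crossed (lower : seq (int * int)) (x : int) : bool :=
  has (fun pr : int * int => (pr.1 < x) && (x < pr.2)) [seq pr <- lower | pr.1 != pr.2].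

Definition stayed_sites (lower : seq (int * int)) : seq int :=
  [seq pr.1 | pr <- lower & pr.1 == pr.2].

Lemma omin_le o z : omin o z <= z.
Proof. by case: o => //= u; rewrite ge_min lexx orbT. Qed.

Lemma ominl_le s u : u \in s -> exists2 u0, ominl s = Some u0 & u0 <= u.
Proof.
case: s => // u1 s us; exists (foldr Num.min u1 s) => //.
elim: s u us => [|w s IH] u; rewrite ?inE; first by move/eqP->.
case/or3P=> [/eqP->|/eqP->|us] /=; rewrite ge_min ?lexx ?orbT //.
  by rewrite (IH u1) ?orbT // inE eqxx.
by rewrite IH ?orbT // inE us orbT.
Qed.

Lemma ominl_gt s x u0 : all (fun u => x < u) s -> ominl s = Some u0 -> x < u0.
Proof.
case: s => // u1 s /= /andP[xu1 xs] [<-].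
by elim: s xs => //= w s IH /andP[xw xs]; rewrite lt_min xw IH.
Qed.

Lemma advance_gt s x (j : nat) : (0 < j)%N -> x < advance s x j.
Proof. by case: j => // j _; rewrite /advance /= ltrDl ltz_nat. Qed.

Section StepClass.
Variables (lower : seq (int * int)) (chi : int -> bool) (j : int -> nat).

Lemma step_class_fst prev ps : map fst (step_class lower chi j prev ps) = ps.
Proof. by elim: ps prev => [|x rest IH] prev //=; rewrite IH. Qed.

Lemma size_step_class prev ps : size (step_class lower chi j prev ps) = size ps.
Proof. by rewrite -(size_map fst) step_class_fst. Qed.

Lemma step_class_move prev ps (q : int * int) :
  q \in step_class lower chi j prev ps -> q.2 != q.1 ->
  [/\ ~~ crossed lower q.1,
      forall pr : int * int, pr \in lower -> pr.1 != pr.2 -> q.1 < pr.1 -> q.2 <= pr.1 &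
      q.2 <= advance (stayed_sites lower) q.1 (j q.1)].
Proof.
elim: ps prev => [|x rest IH] prev //=; rewrite inE => /orP[/eqP-> /=|]; last exact: IH.
case: ifP => [_|]; first by rewrite eqxx.
move/negbT; rewrite negb_or => /andP[ncross _] _; split => //.
- move=> pr prl prm xp.
  have : pr.1 \in [seq pr.1 | pr <- [seq pr <- lower | pr.1 != pr.2] & x < pr.1].
    by apply: map_f; rewrite !mem_filter prm xp prl.
  by case/ominl_le => u0 -> u0le /=; apply: le_trans u0le; rewrite ge_min lexx.
- by apply: le_trans (omin_le _ _) _; exact: omin_le.
Qed.

Hypothesis j_gt0 : forall x, (0 < j x)%N.

Lemma step_class_stay prev ps (q : int * int) : sorted <%R ps ->
  q \in step_class lower chi j prev ps -> q.2 = q.1 -> crossed lower q.1 || chi q.1.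
Proof.
elim: ps prev => [|x rest IH] prev //= srt; rewrite inE => /orP[/eqP-> /=|]; last first.
  exact/IH/(path_sorted srt).
rewrite /crossed; case: ifP => [/orP[->//|/andP[_ ->]]|_ /eqP]; first by rewrite orbT.
have xV := advance_gt (stayed_sites lower) x (j_gt0 x).
have xyV : x < omin (ohead rest) (advance (stayed_sites lower) x (j x)).
  by case: rest srt {IH} => [|y r] //= /andP[xy _]; rewrite lt_min xy.
rewrite gt_eqF //; case E: ominl => [u0|] //=; rewrite lt_min xyV andbT.
apply: ominl_gt E; apply/allP => u /mapP [pr].
by rewrite mem_filter => /andP[? _] ->.
Qed.

End StepClass.

Lemma count_free_S s x d :
  count_free s x d.+1 = addn (count_free s x d) ((x + (d.+1)%:Z) \notin s).
Proof. by rewrite /count_free -addn1 iotaD count_cat /= addn0 add0n addn1. Qed.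

Lemma discrete_ivt (f : nat -> nat) (y D : nat) :
  f 0%N = 0%N -> (forall d, f d.+1 <= (f d).+1)%N ->
  (y <= f D)%N -> exists2 d, (d <= D)%N & f d = y.
Proof.
move=> f0 fS; elim: D => [|D IH] yD; first by exists 0%N => //; lia.
case: (leqP y (f D)) => [/IH [d dD fd]|fDy]; first by exists d => //; lia.
by exists D.+1 => //; have := fS D; lia.
Qed.

Lemma count_free_lt_advance s x (jx v : nat) : (0 < jx)%N -> (0 < v)%N ->
  x + v%:Z <= advance s x jx -> (count_free s x v.-1 < jx)%N.
Proof.
move=> jx0 v0; rewrite /advance lerD2l lez_nat => v_le; rewrite ltnNge; apply/negP.
have fS d : (count_free s x d.+1 <= (count_free s x d).+1)%N.
  by rewrite count_free_S; case: (_ \notin _); lia.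
case/(discrete_ivt (f := count_free s x) erefl fS) => d dv cd.
have := find_size (fun d => count_free s x d == jx) (iota 0 (jx + size s).+1).
rewrite size_iota => find_le.
have d_lt : (d < find (fun d => count_free s x d == jx) (iota 0 (jx + size s).+1))%N.
  by lia.
by have := before_find 0%N d_lt; rewrite nth_iota ?add0n ?cd ?eqxx //; lia.
Qed.

Lemma mem_positions eta a W r s :
  (s \in positions eta a W r) = (eta s == r) && (a <= s < a + W%:Z).
Proof.
rewrite /positions mem_filter; congr andb.
apply/mapP/idP => [[i] /[!mem_iota] /andP[_ hi] ->|/andP[h1 h2]]; first lia.
by exists `|s - a|%N; [rewrite mem_iota|]; lia.
Qed.

Lemma sorted_positions eta a W r : sorted <%R (positions eta a W r).
Proof.
apply: sorted_filter; first exact: lt_trans.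
rewrite sorted_map; apply: sub_sorted (iota_ltn_sorted 0 W) => i k /= ik.
by rewrite ltrD2l ltz_nat.
Qed.

Definition lower_window (eta : int -> nat) (r : nat) (x : int) (d : nat) : seq int :=
  [seq s <- [seq x + (i.+1)%:Z | i <- iota 0 d] | (0 < eta s < r)%N].

Lemma mem_lower_window eta r x d s :
  (s \in lower_window eta r x d) = (0 < eta s < r)%N && (x < s <= x + d%:Z).
Proof.
rewrite mem_filter; congr andb.
apply/mapP/idP => [[i] /[!mem_iota] /andP[_ hi] ->|/andP[h1 h2]]; first lia.
by exists `|s - x|.-1; [rewrite mem_iota|]; lia.
Qed.

Lemma lower_window_uniq eta r x d : uniq (lower_window eta r x d).
Proof.
by apply/filter_uniq; rewrite map_inj_uniq ?iota_uniq // => i1 i2 /addrI [].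
Qed.

Lemma size_lower_window eta r x d : (size (lower_window eta r x d) <= d)%N.
Proof. by rewrite size_filter (leq_trans (count_size _ _)) // size_map size_iota. Qed.

Section Run.
Variables (eta : int -> nat) (a : int) (W : nat).
Variables (chi : nat -> int -> bool) (j : nat -> int -> nat).

Local Notation run := (run eta a W chi j).
Local Notation update c :=
  (step_class (flatten (run c.-1)) (chi c) (j c) None (positions eta a W c)).

Lemma size_run m : size (run m) = m.
Proof. by elim: m => //= m IH; rewrite size_rcons IH. Qed.

Lemma nth_run m c : (c < m)%N -> nth [::] (run m) c = update c.+1.
Proof.
elim: m => // m IH cm /=; rewrite nth_rcons size_run.
case: ltnP => [cm'|mc]; first exact: IH.
have -> : c = m by lia.
by rewrite eqxx.
Qed.

Lemma mem_flatten_run m (q : int * int) :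
  (q \in flatten (run m)) = [exists c : 'I_m, q \in update c.+1].
Proof.
elim: m => [|m IH] /=; first by apply/esym/existsP => -[[]].
rewrite flatten_rcons mem_cat IH; apply/orP/existsP => [[/existsP[c qc]|qm]|[c]].
- by exists (widen_ord (leqnSn m) c).
- by exists ord_max.
case: (ltnP c m) => [cm qc|mc qc]; first by left; apply/existsP; exists (Ordinal cm).
by right; have -> : m = c by have := ltn_ord c; lia.
Qed.

Lemma flatten_run_mono c m (q : int * int) :
  (c <= m)%N -> q \in flatten (run c) -> q \in flatten (run m).
Proof.
rewrite !mem_flatten_run => cm /existsP[i qi]; apply/existsP.
by exists (widen_ord cm i).
Qed.

Lemma update_sub_flatten_run c m (q : int * int) :
  (0 < c <= m)%N -> q \in update c -> q \in flatten (run m).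
Proof.
move=> cm qc; have c_lt : (c.-1 < m)%N by lia.
rewrite mem_flatten_run; apply/existsP; exists (Ordinal c_lt).
by rewrite /= prednK //; lia.
Qed.

Lemma flatten_run_class m (q : int * int) : q \in flatten (run m) -> (0 < eta q.1 <= m)%N.
Proof.
rewrite mem_flatten_run => /existsP[c /(map_f fst)].
by rewrite step_class_fst mem_positions => /andP[/eqP-> _]; have := ltn_ord c; lia.
Qed.

Lemma update_site s :
  a <= s < a + W%:Z -> exists2 q : int * int, q \in update (eta s) & q.1 = s.
Proof.
move=> box; have : s \in map fst (update (eta s)).
  by rewrite step_class_fst mem_positions eqxx.
by case/mapP => q qu sq; exists q.
Qed.

Hypothesis j_gt0 : forall c x, (0 < j c x)%N.
Hypothesis eta_box : forall x, eta x != 0%N -> (a <= x) && (x < a + W%:Z).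

Lemma far_jump_lower_chi r (q : int * int) v : q \in update r -> q.1 + (v.+1)%:Z <= q.2 ->
  forall s : int, s \in lower_window eta r q.1 v -> chi (eta s) s.
Proof.
move=> qu far s; rewrite mem_lower_window => /andP[/andP[s0 sr] /andP[qs sq]].
have qmove : q.2 != q.1 by rewrite gt_eqF //; lia.
have [ncross q_below _] := step_class_move qu qmove.
have /(map_f fst) := qu; rewrite step_class_fst mem_positions => /andP[/eqP q_cls _].
have [p pu ps] := update_site (eta_box (lt0n_neq0 s0)).
have plow : p \in flatten (run r.-1) by apply: update_sub_flatten_run pu; lia.
have p_stays : p.2 = p.1.
  case: (eqVneq p.1 p.2) => [->//|pm].
  by have := q_below p plow pm; rewrite ps => /(_ qs); lia.
have := step_class_stay (j_gt0 _) (sorted_positions _ _ _ _) pu p_stays.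
rewrite ps => /orP[/hasP[pr /[!mem_filter] /andP[prm prl] /andP[pr_s s_pr]]|//].
have prlow : pr \in flatten (run r.-1) by apply: flatten_run_mono prl; lia.
have pr_cls := flatten_run_class prl.
(* The particle jumping over s starts left of x, in (x, s), or at x (which holds class r). *)
case: (ltgtP pr.1 q.1) => [prq|qpr|prq].
- case/negP: ncross; apply/hasP; exists pr; first by rewrite mem_filter prm.
  by rewrite /= prq (lt_trans qs s_pr).
- by exfalso; have := q_below pr prlow prm qpr; lia.
- by exfalso; move: pr_cls; rewrite prq q_cls; lia.
Qed.

Lemma far_jump_j r (q : int * int) v : q \in update r -> q.1 + (v.+1)%:Z <= q.2 ->
  (v - size (lower_window eta r q.1 v) < j r q.1)%N.
Proof.
move=> qu far.
have qmove : q.2 != q.1 by rewrite gt_eqF //; lia.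
have [_ _ q_adv] := step_class_move qu qmove.
have := count_free_lt_advance (j_gt0 r q.1) (ltn0Sn v) (le_trans far q_adv).
apply: leq_ltn_trans; rewrite leq_subLR size_filter count_map /count_free.
set lower_i := [pred i : nat | (0 < eta (q.1 + (i.+1)%:Z) < r)%N].
rewrite -[X in (X <= _)%N](size_iota 0 v) -(count_predC lower_i) leq_add2l.
apply: sub_count => i /= /negP free; apply/negP => stayed_i; apply: free.
case/mapP: stayed_i => pr /[!mem_filter] /andP[_ /flatten_run_class] + ->.
by move: (eta pr.1) => e; lia.
Qed.

Lemma long_jump_event n r k v : (1 <= r <= n)%N ->
  (1 <= k <= size (positions eta a W r))%N ->
  v%:Z <= displacement eta a W chi j n r k ->
  let x := nth 0 (positions eta a W r) k.-1 in
  (forall s : int, s \in lower_window eta r x v.-1 -> chi (eta s) s) /\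
  (v.-1 - size (lower_window eta r x v.-1) < j r x)%N.
Proof.
move=> hr hk; rewrite /displacement nth_run; last by lia.
rewrite prednK; last by lia.
set q := nth (0, 0) _ k.-1; set x := nth 0 _ k.-1 => jump.
have qu : q \in update r by rewrite mem_nth // size_step_class; lia.
have <- : q.1 = x.
  rewrite /x -{1}(step_class_fst (flatten (run r.-1)) (chi r) (j r) None (positions eta a W r)).
  by rewrite (nth_map (0, 0)) // size_step_class; lia.
move: jump; rewrite lerBrDl; case: v => [|v] jump; first by rewrite sub0n j_gt0.
by split; [apply: far_jump_lower_chi qu jump | apply: far_jump_j qu jump].
Qed.
End Run.

Section ProductBound.
Variable R : realType.

Lemma sum_box_bound (I T : finType) (g : I -> T * nat -> R) (c : I -> R)
    (g_ge0 : forall i p, 0 <= g i p)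
    (g_le : forall i M, \sum_(p : T * 'I_M) g i (p.1, val p.2) <= c i)
    (s : seq {ffun I -> T * nat}) :
  uniq s -> \sum_(om <- s) \prod_i g i (om i) <= \prod_i c i.
Proof.
move=> s_uniq; set M := (\max_(om <- s) \max_i (om i).2).+1.
pose proj (om : {ffun I -> T * nat}) : {ffun I -> T * 'I_M} :=
  [ffun i => ((om i).1, inord (om i).2)].
pose emb (f : {ffun I -> T * 'I_M}) : {ffun I -> T * nat} :=
  [ffun i => ((f i).1, val (f i).2)].
have projK : {in s, cancel proj emb}.
  move=> om oms; apply/ffunP => i; rewrite !ffunE /= inordK; first by case: (om i).
  have om_le := @leq_bigmax_seq _ s xpredT (fun om => \max_i (om i).2) om oms erefl.
  by rewrite ltnS (leq_trans _ om_le) // (@leq_bigmax I (fun i => (om i).2) i).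
have -> : s = map emb (map proj s) by rewrite -map_comp map_id_in.
rewrite big_map big_uniq ?(map_inj_in_uniq (can_in_inj projK)) //.
apply: (@le_trans _ _ (\sum_(f : {ffun I -> T * 'I_M}) \prod_i g i (emb f i))).
  rewrite [leRHS](bigID (mem (map proj s))) /= lerDl.
  by apply: sumr_ge0 => f _; apply: prodr_ge0.
rewrite (eq_bigr (fun f : {ffun I -> T * 'I_M} => \prod_i g i ((f i).1, val (f i).2))).
  rewrite -(bigA_distr_bigA (fun i (p : T * 'I_M) => g i (p.1, val p.2))).
  by apply: ler_prod => i _; rewrite g_le andbT sumr_ge0.
by move=> f _; apply: eq_bigr => i _; rewrite ffunE.
Qed.

Lemma esum_box_bound (I T : finType) (g : I -> T * nat -> R) (c : I -> R)
    (g_ge0 : forall i p, 0 <= g i p)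
    (g_le : forall i M, \sum_(p : T * 'I_M) g i (p.1, val p.2) <= c i) :
  (\esum_(om in [set: {ffun I -> T * nat}]) (\prod_i g i (om i))%:E
     <= (\prod_i c i)%:E)%E.
Proof.
apply: ge_ereal_sup => _ [X [finX _] <-].
rewrite fsbig_finite // sumEFin lee_fin.
by apply: sum_box_bound => //; exact: finmap.fset_uniq.
Qed.

End ProductBound.

Section Weight.
Variables (R : realType) (b1 b2 : R).
Hypotheses (b1_ge0 : 0 <= b1) (b1_le1 : b1 <= 1) (b2_ge0 : 0 <= b2) (b2_le1 : b2 <= 1).

Definition factor (p : bool * nat) : R :=
  (if p.1 then b1 else 1 - b1) * ((1 - b2) * b2 ^+ p.2).

Lemma factor_ge0 p : 0 <= factor p.
Proof.
rewrite /factor !mulr_ge0 ?subr_ge0 ?exprn_ge0 //.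
by case: p.1; rewrite ?subr_ge0.
Qed.

Lemma sum_geometric_tail (K M : nat) :
  \sum_(m < M) (1 - b2) * b2 ^+ m * (K <= m)%N%:R = b2 ^+ K - b2 ^+ maxn K M.
Proof.
elim: M => [|M IH]; first by rewrite big_ord0 maxn0 subrr.
rewrite big_ord_recr /= IH; case: (leqP K M) => KM.
  by rewrite mulr1 (maxn_idPr (leqW KM)) exprS; ring.
by rewrite mulr0 addr0 (maxn_idPl KM).
Qed.

Lemma factor_tail_le (forced : bool) (K M : nat) :
  \sum_(p : bool * 'I_M) factor (p.1, val p.2) * ((forced ==> p.1) && (K <= p.2)%N)%:R
    <= (if forced then b1 else 1) * b2 ^+ K.
Proof.
have tail_le : \sum_(m < M) (1 - b2) * b2 ^+ m * (K <= m)%N%:R <= b2 ^+ K.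
  by rewrite sum_geometric_tail lerBlDr lerDl exprn_ge0.
rewrite -(pair_bigA _ (fun b (m : 'I_M) =>
  factor (b, val m) * ((forced ==> b) && (K <= m)%N)%:R)) big_bool.
case: forced => /=.
  rewrite [X in _ + X]big1 => [|m _]; last by rewrite mulr0.
  under eq_bigr do rewrite /factor /= -mulrA.
  by rewrite -mulr_sumr addr0 ler_wpM2l.
under eq_bigr do rewrite /factor /= -mulrA.
under [X in _ + X]eq_bigr do rewrite /factor /= -mulrA.
by rewrite -!mulr_sumr -mulrDl addrC subrK !mul1r.
Qed.

Lemma weight_event_le n W (E : pred (Omega n W)) (L : {set 'I_n * 'I_W}) i0 (K : nat) :
  (forall om, E om -> (forall i, i \in L -> (om i).1) /\ (K <= (om i0).2)%N) ->
  (\esum_(om in [set: Omega n W]) (if E om then (weight b1 b2 om)%:E else 0%E)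
     <= (b1 ^+ #|L| * b2 ^+ K)%:E)%E.
Proof.
move=> E_sub; pose Ki i := if i == i0 then K else 0%N.
pose g i p := factor p * (((i \in L) ==> p.1) && (Ki i <= p.2)%N)%:R.
have g_ge0 i p : 0 <= g i p by rewrite mulr_ge0 ?factor_ge0.
apply: (@le_trans _ _ (\esum_(om in [set: Omega n W]) (\prod_i g i (om i))%:E)).
  apply: le_esum => om _; case: ifP => [/E_sub[om_L om_i0]|_]; last first.
    by rewrite lee_fin prodr_ge0.
  rewrite lee_fin le_eqVlt; apply/orP; left; apply/eqP/eq_bigr => i _.
  rewrite /g (_ : _ && _ = true) ?mulr1 //; apply/andP; split.
    by apply/implyP => /om_L.
  by rewrite /Ki; case: eqP => // ->.
apply: le_trans (esum_box_bound g_ge0 (fun i M => factor_tail_le (i \in L) (Ki i) M)) _.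
rewrite lee_fin big_split /= -big_mkcond prodr_const prodrXr (bigD1 i0) //= big1.
  by rewrite /Ki eqxx addn0.
by move=> i /negbTE i_ne; rewrite /Ki i_ne.
Qed.

End Weight.

Definition site_coord (n W : nat) (a : int) (c : nat) (s : int) : 'I_n.+1 * 'I_W.+1 :=
  (inord c.-1, inord `|s - a|%N).

Lemma lookup_site_coord n W a (om : Omega n.+1 W.+1) c s :
  (0 < c <= n.+1)%N -> a <= s < a + W.+1%:Z ->
  lookup a om c s = om (site_coord n W a c s).
Proof.
move=> c_ok s_box; rewrite /lookup; case: pickP => [i /andP[/eqP i1 /eqP i2]|].
  congr (om _); case: i i1 i2 => [[c' ?] [w' ?]] /= i1 i2.
  by congr (_, _); apply: val_inj; rewrite /= inordK; lia.
by move/(_ (site_coord n W a c s)); rewrite /= !inordK ?eqxx //=; lia.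
Qed.

Lemma site_coord_inj n W a c1 c2 s1 s2 :
  a <= s1 < a + W.+1%:Z -> a <= s2 < a + W.+1%:Z ->
  site_coord n W a c1 s1 = site_coord n W a c2 s2 -> s1 = s2.
Proof. by move=> ? ? /(congr1 (fun i => val i.2)) /=; rewrite !inordK; lia. Qed.

Lemma mixed_power_le (R : realFieldType) (b1 b2 : R) (l d : nat) :
  0 <= b1 <= b2 -> (l <= d)%N -> b1 ^+ l * b2 ^+ (d - l) <= b2 ^+ d.
Proof.
move=> /andP[b1_ge0 b12] ld; have b2_ge0 := le_trans b1_ge0 b12.
by rewrite -{2}(subnKC ld) exprD ler_wpM2r ?lerXn2r ?exprn_ge0 ?nnegrE.
Qed.

Lemma expr_pred_le_exprz (R : realFieldType) (b : R) (v : nat) :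
  0 < b <= 1 -> b ^+ v.-1 <= b ^ (v%:Z - 1).
Proof.
case/andP=> b_gt0 b_le1; case: v => [|v].
  by rewrite expr0 (_ : 0%:Z - 1 = -1) // exprN1 invf_ge1.
by rewrite (_ : v.+1%:Z - 1 = v%:Z) //; lia.
Qed.

Unset Implicit Arguments. Set Strict Implicit.
Theorem lemma2p10 (R : realType) (b1 b2 : R)
  (hb1 : 0 < b1) (hb12 : b1 < b2) (hb2 : b2 < 1)
  (n : nat) (eta : int -> nat) (a : int) (W : nat)
  (heta_cls : forall x, (eta x <= n)%N)
  (heta_box : forall x, eta x != 0%N -> (a <= x) && (x < a + W%:Z))
  (v r k : nat) (hr : (1 <= r <= n)%N)
  (hk : (1 <= k <= size (positions eta a W r))%N) :
  (prob_disp_ge b1 b2 n eta a W r k v <= (b2 ^ (v%:Z - 1))%:E)%E.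
Proof.
case: n heta_cls hr => [|n] heta_cls hr; first by lia.
case: W heta_box hk => [|W] heta_box hk; first by rewrite /positions /= in hk; lia.
set x := nth 0 (positions eta a W.+1 r) k.-1.
have k_lt : (k.-1 < size (positions eta a W.+1 r))%N by lia.
have := mem_nth 0 k_lt; rewrite -/x mem_positions => /andP[_ x_box].
set Lw := lower_window eta r x v.-1.
have Lw_site s : s \in Lw -> (0 < eta s <= n.+1)%N /\ a <= s < a + W.+1%:Z.
  rewrite mem_lower_window => /andP[/andP[s0 _] _].
  by split; [have := heta_cls s; lia | apply: heta_box; rewrite -lt0n].
pose coord s := site_coord n W a (eta s) s.
have card_coord : #|[set i in map coord Lw]| = size Lw.
  rewrite cardsE (card_uniqP _) ?size_map // map_inj_in_uniq ?lower_window_uniq //.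
  by move=> s1 s2 /Lw_site[_ ?] /Lw_site[_ ?]; apply: site_coord_inj.
have b2_gt0 : 0 < b2 by exact: lt_trans hb12.
have b1_le1 : b1 <= 1 by exact/ltW/(lt_trans hb12).
apply: le_trans (weight_event_le (ltW hb1) b1_le1 (ltW b2_gt0) (ltW hb2)
  (L := [set i in map coord Lw]) (i0 := site_coord n W a r x) (K := v.-1 - size Lw) _) _.
move=> om /(long_jump_event (fun _ _ => ltn0Sn _) heta_box hr hk) [chi_Lw j_x]; split.
  move=> _ /[!inE] /mapP[s /[dup] /Lw_site[? ?] sL ->].
  by rewrite -lookup_site_coord //; exact: chi_Lw.
by move: j_x; rewrite /j_of lookup_site_coord //; lia.
rewrite lee_fin card_coord; apply: le_trans (expr_pred_le_exprz _ _).
  by apply: mixed_power_le; rewrite ?ltW ?size_lower_window.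
by rewrite b2_gt0 ltW.
Qed.
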